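(* Let $\mathbb{F}$ be a field, $A\in\mathbb{F}^{k\times n}$ a matrix of rank $k$, $W$ the row space of $A$, and $M=M(A)$. For every $u\in\mathbb{F}^k$ there exists $v\in\mathbb{F}^n$ such that $M/u=M/^\bullet v$, and conversely, for every $v\in\mathbb{F}^n$ there exists $u\in\mathbb{F}^k$ such that $M/u=M/^\bullet v$.
   Context: Both matroids are on the ground set $\{1,\dots,n\}$ indexing the columns of $A$. $M/u$ is the matroid in which a set of columns $\{c_1,\dots,c_\ell\}$ of $A$ is dependent iff there exist $\alpha_1,\dots,\alpha_\ell\in\mathbb{F}$, not all $0$, with $\sum_i\alpha_ic_i\in\mathrm{span}(u)$. For a subspace $U\subseteq\mathbb{F}^n$, $M(U)$ is the column matroid of a matrix whose rows form a basis of $U$, and $M/^\bullet v:=M(W\cap\mathrm{span}(v)^\perp)$, where $\mathrm{span}(v)^\perp=\{x\in\mathbb{F}^n:\sum_ix_iv_i=0\}$. *)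

From HB Require Import structures.
From mathcomp Require Import all_boot all_order all_algebra.
Set Implicit Arguments. Unset Strict Implicit. Unset Printing Implicit Defensive.
Import GRing.Theory.
Local Open Scope ring_scope.

(* Matroids on the ground set 'I_n (= {1,...,n} indexing columns),
   represented by their dependent-set predicate. *)

Definition col_dep (F : fieldType) (m n : nat) (B : 'M[F]_(m, n))
  (S : {set 'I_n}) : Prop :=
  exists alpha : 'cV[F]_n,
    [/\ alpha != 0, (forall i, i \notin S -> alpha i 0 = 0) & B *m alpha = 0].

(* M(U): column matroid of a matrix whose rows form a basis of the subspace U
   (U given as a matrix whose row space is the subspace, mxalgebra style). *)
Definition M_of (F : fieldType) (p n : nat) (U : 'M[F]_(p, n))
  (S : {set 'I_n}) : Prop := col_dep (row_base U) S.

(* M/u for M = M(A): S dependent iff a nontrivial combination of the columns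
   indexed by S lies in span(u). *)
Definition contr_vec (F : fieldType) (k n : nat) (A : 'M[F]_(k, n))
  (u : 'cV[F]_k) (S : {set 'I_n}) : Prop :=
  exists alpha : 'cV[F]_n,
    [/\ alpha != 0, (forall i, i \notin S -> alpha i 0 = 0)
      & exists c : F, A *m alpha = c *: u].

(* span(v)^perp = {x | sum_i x_i v_i = 0}, as the row space of kermx v^T. *)
Definition perp_line (F : fieldType) (n : nat) (v : 'rV[F]_n) : 'M[F]_n :=
  kermx v^T.

(* M /. v := M(W ∩ span(v)^perp), W the row space of A. *)
Definition contr_bullet (F : fieldType) (k n : nat) (A : 'M[F]_(k, n))
  (v : 'rV[F]_n) (S : {set 'I_n}) : Prop :=
  M_of (A :&: perp_line v)%MS S.

Definition same_matroid (n : nat) (D1 D2 : {set 'I_n} -> Prop) : Prop :=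
  forall S, D1 S <-> D2 S.

(* Let W' := W ∩ span(v)^⊥.  Its vectors are exactly the x A with x ⊥ A v^T, so a
   coefficient vector a annihilates W' iff A a is a multiple of A v^T: the column
   relations of M(W') are those of M/(A v^T), i.e. M/^• v = M/(A v^T).  Since A has full
   row rank, every u ∈ F^k is of the form A v^T. *)
From mathcomp Require Import all_boot all_order all_algebra.
From mathcomp Require Import zify.
Local Open Scope ring_scope.
Import GRing.Theory.

Section ColumnRelations.
Set Implicit Arguments. Unset Strict Implicit.
Variable F : fieldType.

Lemma submx_mul_eq0 (m1 m2 n p : nat)
    (A : 'M[F]_(m1, n)) (B : 'M[F]_(m2, n)) (C : 'M[F]_(n, p)) :
  (A <= B)%MS -> B *m C = 0 -> A *m C = 0.
Proof. by case/submxP=> D ->; rewrite -mulmxA => ->; rewrite mulmx0. Qed.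

Lemma row_base_mul_eq0 (m n p : nat) (B : 'M[F]_(m, n)) (C : 'M[F]_(n, p)) :
  row_base B *m C = 0 <-> B *m C = 0.
Proof. by split; apply: submx_mul_eq0; rewrite eq_row_base. Qed.

Lemma kermx_sub_tr (m n p : nat) (A : 'M[F]_(m, p)) (B : 'M[F]_(m, n)) :
  (kermx B <= kermx A)%MS -> (A^T <= B^T)%MS.
Proof.
move=> kerBA.
have ker_row_mx : (kermx (row_mx B A) :=: kermx B)%MS.
  apply/eqmxP/andP; split; apply/sub_kermxP.
    by have /eqP := mulmx_ker (row_mx B A); rewrite mul_mx_row row_mx_eq0 => /andP[/eqP].
  by rewrite mul_mx_row mulmx_ker (sub_kermxP kerBA) row_mx0.
have rank_row_mx : \rank (row_mx B A) = \rank B.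
  have := mxrank_ker (row_mx B A); rewrite ker_row_mx mxrank_ker.
  by move: (rank_leq_row (row_mx B A)) (rank_leq_row B); lia.
have /mxrank_leqif_sup sumBA := addsmxSl B^T A^T.
apply: submx_trans (addsmxSr B^T A^T) _.
by rewrite -sumBA addsmxE -tr_row_mx !mxrank_tr rank_row_mx.
Qed.

Lemma capmx_kermx_mul_eq0 (k n : nat) (A : 'M[F]_(k, n)) (w a : 'cV[F]_n) :
  (A :&: kermx w)%MS *m a = 0 <-> exists c, A *m a = c *: (A *m w).
Proof.
split=> [capAw_a0 | [c Aa]].
  have /kermx_sub_tr/sub_rVP[c Aa] : (kermx (A *m w) <= kermx (A *m a))%MS.
    apply/sub_kermxP; rewrite mulmxA; apply: submx_mul_eq0 capAw_a0.
    by rewrite sub_capmx submxMl; apply/sub_kermxP; rewrite -mulmxA mulmx_ker.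
  by exists c; apply: trmx_inj; rewrite Aa; apply/matrixP => i j; rewrite !mxE.
have capAw_w0 : (A :&: kermx w)%MS *m w = 0 by apply/sub_kermxP/capmxSr.
have : A *m (a - c *: w) = 0 by rewrite mulmxBr Aa scalemxAr subrr.
move/(submx_mul_eq0 (capmxSl A (kermx w))).
by rewrite mulmxBr -scalemxAr capAw_w0 scaler0 subr0.
Qed.

Lemma contr_vec_mulmx_tr (k n : nat) (A : 'M[F]_(k, n)) (v : 'rV[F]_n) :
  same_matroid (contr_vec A (A *m v^T)) (contr_bullet A v).
Proof.
move=> S; split=> -[a [a_neq0 a_supp relation]]; exists a; split=> //.
  by apply/row_base_mul_eq0/capmx_kermx_mul_eq0.
by apply/capmx_kermx_mul_eq0/row_base_mul_eq0.
Qed.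

End ColumnRelations.

Theorem lemma19 (F : fieldType) (k n : nat) (A : 'M[F]_(k, n)) :
  \rank A = k ->
  (forall u : 'cV[F]_k, exists v : 'rV[F]_n,
      same_matroid (contr_vec A u) (contr_bullet A v)) /\
  (forall v : 'rV[F]_n, exists u : 'cV[F]_k,
      same_matroid (contr_vec A u) (contr_bullet A v)).
Proof.
move=> rankA; split=> [u | v]; last by exists (A *m v^T); apply: contr_vec_mulmx_tr.
have /submxP[v uT] : (u^T <= A^T)%MS by rewrite submx_full // /row_full mxrank_tr rankA.
exists v; have -> : u = A *m v^T by rewrite -[u]trmxK uT trmx_mul trmxK.
exact: contr_vec_mulmx_tr.
Qed.
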